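(* Let $f\in C^1([0,1],\mathbb{R})$ satisfy $f(0)=f(1)=0$, $f(s)>0$ for all $s\in(0,1)$, $f'(1)<0$, and suppose there exist $s_0\in(0,1)$, $K\ge 0$, $\alpha>0$ and $r>0$ such that $$f(s)\le r\frac{s}{(1+|\ln s|)^\alpha}\ \text{ for all } s\in(0,1),\qquad f(s)\ge r\frac{s}{(1+|\ln s|)^\alpha}(1-Ks)\ \text{ for all } s\in(0,s_0].$$ Let $\mu>0$, $p:=\frac{1}{\alpha+1}$, and for $M>e$ define $z_0:=\big(\frac{\ln M}{\mu}\big)^{1/p}$ and $w(z):=Me^{-\mu z^p}$ for $z\ge z_0$ (so $0<w\le1$). Then for any $M>e$ there is $c>0$ such that $$w''(z)+cw'(z)+f(w(z))\le 0\quad\text{for all } z\ge z_0.$$ *)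

From Stdlib Require Import Reals.
From Coquelicot Require Import Coquelicot.
Open Scope R_scope.

Definition I01 (x : R) : Prop := 0 <= x <= 1.

Definition has_deriv_01 (f : R -> R) (x l : R) : Prop :=
  filterlim (fun y => (f y - f x) / (y - x))
    (within (fun y => I01 y /\ y <> x) (locally x)) (locally l).

Definition C1_01 (f df : R -> R) : Prop :=
  (forall x, I01 x -> has_deriv_01 f x (df x)) /\
  (forall x, I01 x -> filterlim df (within I01 (locally x)) (locally (df x))).

Definition wfun (M mu p : R) (z : R) : R := M * exp (- mu * Rpower z p).

(* Write u = z^p, so that z = u^(alpha+1) and w = M exp(-mu u).  Then
   w' = -mu p u^(-alpha) w and w'' = mu p u^(-alpha) w ((1-p)/z + mu p u^(-alpha)).
   Since ln w = ln M - mu u <= 0 and ln M > 1, we have 1 + |ln w| >= u/u0 with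
   u0 = ln M / mu = z0^p, so the upper bound on f gives f(w) <= r u0^alpha u^(-alpha) w.
   All three terms are thus multiples of u^(-alpha) w whose coefficients decrease
   in z, and any c >= (1-p)/z0 + mu p u0^(-alpha) + r u0^alpha/(mu p) works.
   Only the upper bound on f and f(1) = 0 are needed. *)

From Stdlib Require Import Reals Lra.
From Coquelicot Require Import Coquelicot.
Open Scope R_scope.

Lemma inv_succ_in_0_1 (a : R) : 0 <= a -> 0 < / (a + 1) <= 1.
Proof.
  intros Ha. split; [apply Rinv_0_lt_compat; lra|].
  rewrite <- Rinv_1. apply Rinv_le_contravar; lra.
Qed.

Lemma Rpower_Rpower_inv (x a : R) : 0 < x -> a <> 0 -> Rpower (Rpower x a) (/ a) = x.
Proof.
  intros Hx Ha. rewrite Rpower_mult, Rinv_r by exact Ha. now apply Rpower_1.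
Qed.

Lemma Rpower_inv_succ_factor (z a : R) : 0 < z -> a + 1 <> 0 ->
  z = Rpower z (/ (a + 1)) * Rpower (Rpower z (/ (a + 1))) a.
Proof.
  intros Hz Ha. rewrite Rpower_mult, <- Rpower_plus.
  replace (/ (a + 1) + / (a + 1) * a) with 1 by (field; exact Ha).
  now rewrite Rpower_1.
Qed.

Lemma profile_ineq_of_speed_bound (mu p k c u z z0 Q B w : R) :
  0 < mu -> 0 < p <= 1 -> 0 <= w -> 0 < u -> 0 < B <= Q -> 0 < z0 <= z -> z = u * Q ->
  (1 - p) / z0 + mu * p / B + k / (mu * p) <= c ->
  mu * p * u / (z * z) * w * (1 - p + mu * p * u) + c * (- mu * p * u / z * w)
    + k * (w / Q) <= 0.
Proof.
  intros Hmu Hp Hw Hu HBQ Hz Hzu Hc.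
  assert (Hmp : 0 < mu * p) by nra.
  assert (Hdrift : (1 - p) / z <= (1 - p) / z0).
  { apply Rmult_le_compat_l; [lra|]. apply Rinv_le_contravar; lra. }
  assert (Hdiff : mu * p / Q <= mu * p / B).
  { apply Rmult_le_compat_l; [lra|]. apply Rinv_le_contravar; lra. }
  assert (Hspeed : mu * p * ((1 - p) / z0) + mu * p * (mu * p / B) + k <= c * (mu * p)).
  { apply (Rmult_le_compat_r (mu * p)) in Hc; [|lra].
    replace (((1 - p) / z0 + mu * p / B + k / (mu * p)) * (mu * p))
      with (mu * p * ((1 - p) / z0) + mu * p * (mu * p / B) + k) in Hc
      by (field; lra).
    exact Hc. }
  replace (mu * p * u / (z * z) * w * (1 - p + mu * p * u) + c * (- mu * p * u / z * w)
             + k * (w / Q))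
    with (w / Q * (mu * p * ((1 - p) / z) + mu * p * (mu * p / Q) + k - c * (mu * p)))
    by (rewrite Hzu; field; lra).
  assert (HwQ : 0 <= w / Q) by (apply Rle_mult_inv_pos; lra).
  assert (mu * p * ((1 - p) / z) + mu * p * (mu * p / Q) <=
          mu * p * ((1 - p) / z0) + mu * p * (mu * p / B)).
  { apply Rplus_le_compat; apply Rmult_le_compat_l; lra. }
  nra.
Qed.

Section WaveProfile.

Variables M mu p : R.

Lemma is_derive_wfun (z : R) : 0 < z ->
  is_derive (wfun M mu p) z (- mu * p * Rpower z p / z * wfun M mu p z).
Proof.
  intros Hz. unfold wfun, Rpower. auto_derive; [lra | field; lra].
Qed.

Lemma Derive_wfun (z : R) : 0 < z ->
  Derive (wfun M mu p) z = - mu * p * Rpower z p / z * wfun M mu p z.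
Proof. intros Hz. apply is_derive_unique, is_derive_wfun, Hz. Qed.

Lemma Derive2_wfun (z : R) : 0 < z ->
  Derive (Derive (wfun M mu p)) z =
    mu * p * Rpower z p / (z * z) * wfun M mu p z * (1 - p + mu * p * Rpower z p).
Proof.
  intros Hz.
  rewrite (Derive_ext_loc _ (fun y => - mu * p * Rpower y p / y * wfun M mu p y)).
  - apply is_derive_unique. unfold wfun, Rpower.
    auto_derive; [repeat split; lra | field; lra].
  - apply (locally_interval _ z 0 p_infty); simpl; auto.
    intros y Hy _. apply Derive_wfun, Hy.
Qed.

Lemma ln_wfun (z : R) : 0 < M -> ln (wfun M mu p z) = ln M - mu * Rpower z p.
Proof.
  intros HM. unfold wfun. rewrite ln_mult, ln_exp; [ring | lra | apply exp_pos].
Qed.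

End WaveProfile.

Lemma le_one_add_gap_mul (L mu u : R) : 1 < L -> 0 < mu -> L / mu <= u ->
  u <= (1 + (mu * u - L)) * (L / mu).
Proof.
  intros HL Hmu Hu.
  assert (HLu : L <= mu * u) by (rewrite Rmult_comm; apply Rle_div_l; lra).
  apply (Rmult_le_reg_l mu); [lra|].
  replace (mu * ((1 + (mu * u - L)) * (L / mu))) with ((1 + (mu * u - L)) * L)
    by (field; lra).
  nra.
Qed.

Lemma le_1_of_ln_nonpos (s : R) : 0 < s -> ln s <= 0 -> s <= 1.
Proof.
  intros Hs Hln. apply Rnot_lt_le. intros Hs1.
  pose proof (ln_increasing 1 s Rlt_0_1 Hs1). rewrite ln_1 in *. lra.
Qed.

Definition wave_speed (alpha r mu M : R) : R :=
  let p := / (alpha + 1) in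
  let U0 := ln M / mu in
  (1 - p) / Rpower U0 (alpha + 1) + mu * p / Rpower U0 alpha
    + r * Rpower U0 alpha / (mu * p).

Lemma wave_speed_gt0 (alpha r mu M : R) : 0 <= alpha -> 0 < r -> 0 < mu ->
  0 < wave_speed alpha r mu M.
Proof.
  intros Halpha Hr Hmu. unfold wave_speed.
  set (p := / (alpha + 1)). set (U0 := ln M / mu).
  assert (Hp : 0 < p <= 1) by now apply inv_succ_in_0_1.
  assert (HB : 0 < Rpower U0 alpha) by apply exp_pos.
  assert (0 <= (1 - p) / Rpower U0 (alpha + 1)) by (apply Rle_mult_inv_pos; [lra | apply exp_pos]).
  assert (0 < mu * p / Rpower U0 alpha) by (apply Rdiv_lt_0_compat; nra).
  assert (0 < r * Rpower U0 alpha / (mu * p)) by (apply Rdiv_lt_0_compat; nra).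
  lra.
Qed.

Section LogarithmicBound.

Variables (f : R -> R) (r alpha : R).
Hypothesis r_gt0 : 0 < r.
Hypothesis alpha_ge0 : 0 <= alpha.
Hypothesis f1 : f 1 = 0.
Hypothesis f_le : forall s, 0 < s < 1 -> f s <= r * (s / Rpower (1 + Rabs (ln s)) alpha).

Lemma f_le_log_weight (s : R) : 0 < s <= 1 ->
  f s <= r * (s / Rpower (1 + Rabs (ln s)) alpha).
Proof.
  intros Hs. destruct (Req_dec s 1) as [->|Hs1]; [|apply f_le; lra].
  rewrite f1. apply Rlt_le, Rmult_lt_0_compat, Rdiv_lt_0_compat; try lra.
  apply exp_pos.
Qed.

Lemma f_le_shifted_power (L mu u s : R) : 1 < L -> 0 < mu -> L / mu <= u ->
  0 < s -> ln s = L - mu * u ->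
  f s <= r * Rpower (L / mu) alpha * (s / Rpower u alpha).
Proof.
  intros HL Hmu Hu Hs Hln.
  assert (HU0 : 0 < L / mu) by (apply Rdiv_lt_0_compat; lra).
  assert (HLu : L <= mu * u) by (rewrite Rmult_comm; apply Rle_div_l; lra).
  assert (Hs1 : s <= 1) by (apply le_1_of_ln_nonpos; lra).
  eapply Rle_trans; [apply f_le_log_weight; lra|].
  rewrite Hln, Rabs_left1 by lra.
  set (P := Rpower (1 + - (L - mu * u)) alpha).
  set (B := Rpower (L / mu) alpha).
  set (Q := Rpower u alpha).
  assert (HP : 0 < P) by apply exp_pos.
  assert (HQ : 0 < Q) by apply exp_pos.
  assert (HQ_PB : Q <= P * B).
  { unfold P, B, Q. rewrite Rpower_mult_distr by lra.
    apply Rle_Rpower_l; [lra|]. split; [lra|].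
    replace (1 + - (L - mu * u)) with (1 + (mu * u - L)) by ring.
    now apply le_one_add_gap_mul. }
  replace (r * (s / P)) with (r * s / (P * Q) * Q) by (field; lra).
  replace (r * B * (s / Q)) with (r * s / (P * Q) * (P * B)) by (field; lra).
  apply Rmult_le_compat_l; [|exact HQ_PB].
  apply Rlt_le, Rdiv_lt_0_compat; nra.
Qed.

Variables mu M : R.
Hypothesis mu_gt0 : 0 < mu.
Hypothesis M_gt_e : exp 1 < M.

Lemma wfun_supersolution (z : R) : Rpower (ln M / mu) (alpha + 1) <= z ->
  Derive (Derive (wfun M mu (/ (alpha + 1)))) z
  + wave_speed alpha r mu M * Derive (wfun M mu (/ (alpha + 1))) z
  + f (wfun M mu (/ (alpha + 1)) z) <= 0.
Proof.
  intros Hz. unfold wave_speed.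
  set (p := / (alpha + 1)). set (U0 := ln M / mu) in *.
  set (z0 := Rpower U0 (alpha + 1)) in *. set (B := Rpower U0 alpha).
  assert (Hp : 0 < p <= 1) by now apply inv_succ_in_0_1.
  assert (HM : 0 < M) by (pose proof (exp_pos 1); lra).
  assert (HL : 1 < ln M).
  { rewrite <- (ln_exp 1). apply ln_increasing; [apply exp_pos | lra]. }
  assert (HU0 : 0 < U0) by (apply Rdiv_lt_0_compat; lra).
  assert (Hz0 : 0 < z0) by apply exp_pos.
  assert (HB : 0 < B) by apply exp_pos.
  assert (Hzpos : 0 < z) by lra.
  set (u := Rpower z p).
  assert (Hu : U0 <= u).
  { rewrite <- (Rpower_Rpower_inv U0 (alpha + 1)) by lra. fold z0.
    apply Rle_Rpower_l; lra. }
  rewrite Derive2_wfun, Derive_wfun by exact Hzpos. fold u.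
  assert (Hw : 0 < wfun M mu p z) by (apply Rmult_lt_0_compat; [lra | apply exp_pos]).
  eapply Rle_trans.
  { apply Rplus_le_compat_l, (f_le_shifted_power (ln M) mu u);
      [lra | lra | exact Hu | exact Hw | apply ln_wfun; lra]. }
  apply (profile_ineq_of_speed_bound mu p (r * B) _ u z z0 (Rpower u alpha) B);
    try lra.
  - split; [exact HB|]. apply Rle_Rpower_l; lra.
  - apply Rpower_inv_succ_factor; lra.
Qed.

End LogarithmicBound.

Theorem lemma2p1 (f df : R -> R) (s0 K alpha r mu : R) :
  C1_01 f df ->
  f 0 = 0 -> f 1 = 0 ->
  (forall s, 0 < s < 1 -> f s > 0) ->
  df 1 < 0 ->
  0 < s0 < 1 -> 0 <= K -> 0 < alpha -> 0 < r ->
  (forall s, 0 < s < 1 -> f s <= r * (s / Rpower (1 + Rabs (ln s)) alpha)) ->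
  (forall s, 0 < s <= s0 ->
     f s >= r * (s / Rpower (1 + Rabs (ln s)) alpha) * (1 - K * s)) ->
  0 < mu ->
  forall M : R, M > exp 1 ->
  exists c : R, c > 0 /\
    forall z : R, z >= Rpower (ln M / mu) (/ (/ (alpha + 1))) ->
      Derive (Derive (wfun M mu (/ (alpha + 1)))) z
      + c * Derive (wfun M mu (/ (alpha + 1))) z
      + f (wfun M mu (/ (alpha + 1)) z) <= 0.
Proof.
  intros _ _ f1 _ _ _ _ Halpha Hr f_le _ Hmu M HM.
  exists (wave_speed alpha r mu M).
  split; [apply wave_speed_gt0; lra|].
  intros z Hz. rewrite Rinv_inv in Hz.
  apply (wfun_supersolution f r alpha Hr (Rlt_le _ _ Halpha) f1 f_le mu M Hmu HM).
  lra.
Qed.
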